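(* Let $L$ be a complex Leibniz algebra, let $I$ be the ideal generated by all squares $[x,x]$, $x\in L$, and suppose $L/I\cong\mathfrak{e}(2)$ and $I$, as a right $\mathfrak{e}(2)$-module via $(i,x+I)\mapsto[i,x]$, is isomorphic to the four-dimensional module with basis $X_1,\dots,X_4$ and action $(X_1,p_+)=X_3$, $(X_1,p_-)=-X_4$, $(X_2,p_-)=-X_3$, $(X_1,l)=\tfrac12X_1$, $(X_2,l)=-\tfrac32X_2$, $(X_3,l)=-\tfrac12X_3$, $(X_4,l)=\tfrac32X_4$ (all other products zero). Then there exists a basis $\{l,p_+,p_-,X_1,X_2,X_3,X_4\}$ of $L$ (with $X_i\in I$) in which the only nonzero products are $[l,p_+]=p_+$, $[p_+,l]=-p_+$, $[l,p_-]=-p_-$, $[p_-,l]=p_-$, $[X_1,p_+]=X_3$, $[X_1,p_-]=-X_4$, $[X_2,p_-]=-X_3$, $[X_1,l]=\tfrac12X_1$, $[X_2,l]=-\tfrac32X_2$, $[X_3,l]=-\tfrac12X_3$, $[X_4,l]=\tfrac32X_4$.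
   Context: A (right) Leibniz algebra is a vector space $L$ with a bilinear bracket satisfying $[[x,y],z]=[[x,z],y]+[x,[y,z]]$. The ideal $I$ generated by squares satisfies $[L,I]=0$, so $L/I$ is a Lie algebra and $I$ is a right $L/I$-module via $(i,x+I)\mapsto[i,x]$. $\mathfrak{e}(2)$ is the complex Lie algebra with basis $\{l,p_+,p_-\}$ and brackets $[l,p_+]=p_+$, $[l,p_-]=-p_-$, $[p_+,p_-]=0$. *)

From mathcomp Require Import all_boot all_order all_algebra.
From mathcomp Require Import reals.
From mathcomp Require Export complex.
Set Implicit Arguments. Unset Strict Implicit. Unset Printing Implicit Defensive.
Import GRing.Theory Num.Theory.
Local Open Scope ring_scope.

Section LeibnizDefs.
Variable C : fieldType.

Definition ev (n : nat) (k : nat) : 'rV[C]_n.+1 := delta_mx 0 (inord k).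

(* e(2) = C^3 with basis l = ev 0, p_+ = ev 1, p_- = ev 2;
   structure constants [b_i, b_j] *)
Definition e2tab (i j : 'I_3) : 'rV[C]_3 :=
  match nat_of_ord i, nat_of_ord j with
  | 0, 1 => ev 2 1
  | 1, 0 => - ev 2 1
  | 0, 2 => - ev 2 2
  | 2, 0 => ev 2 2
  | _, _ => 0
  end.

Definition e2br (u v : 'rV[C]_3) : 'rV[C]_3 :=
  \sum_(i < 3) \sum_(j < 3) (u 0 i * v 0 j) *: e2tab i j.

(* the 4-dimensional right e(2)-module, basis X1..X4 = ev 0 .. ev 3 *)
Definition modtab (i : 'I_4) (j : 'I_3) : 'rV[C]_4 :=
  match nat_of_ord i, nat_of_ord j with
  | 0, 1 => ev 3 2
  | 0, 2 => - ev 3 3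
  | 1, 2 => - ev 3 2
  | 0, 0 => 2^-1 *: ev 3 0
  | 1, 0 => - (3%:R / 2%:R) *: ev 3 1
  | 2, 0 => - 2^-1 *: ev 3 2
  | 3, 0 => (3%:R / 2%:R) *: ev 3 3
  | _, _ => 0
  end.

Definition modact (m : 'rV[C]_4) (x : 'rV[C]_3) : 'rV[C]_4 :=
  \sum_(i < 4) \sum_(j < 3) (m 0 i * x 0 j) *: modtab i j.

Variable L : lmodType C.
Variable br : L -> L -> L.

Definition bilinear_br : Prop :=
  (forall (a : C) (x y z : L), br (a *: x + y) z = a *: br x z + br y z) /\
  (forall (a : C) (x y z : L), br z (a *: x + y) = a *: br z x + br z y).

Definition right_leibniz : Prop :=
  forall x y z : L, br (br x y) z = br (br x z) y + br x (br y z).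

Definition is_ideal (S : L -> Prop) : Prop :=
  S 0 /\ (forall (a : C) x y, S x -> S y -> S (a *: x + y)) /\
  (forall x y, S x -> S (br x y) /\ S (br y x)).

Definition sq_ideal (x : L) : Prop :=
  forall S : L -> Prop, is_ideal S -> (forall y, S (br y y)) -> S x.

(* the basis l,p+,p-,X1,X2,X3,X4 = b 0, ..., b 6 : structure constants *)
Definition target_tab (b : 'I_7 -> L) (i j : 'I_7) : L :=
  match nat_of_ord i, nat_of_ord j with
  | 0, 1 => b (inord 1)
  | 1, 0 => - b (inord 1)
  | 0, 2 => - b (inord 2)
  | 2, 0 => b (inord 2)
  | 3, 1 => b (inord 5)
  | 3, 2 => - b (inord 6)
  | 4, 2 => - b (inord 5)
  | 3, 0 => 2^-1 *: b (inord 3)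
  | 4, 0 => - (3%:R / 2%:R) *: b (inord 4)
  | 5, 0 => - 2^-1 *: b (inord 5)
  | 6, 0 => (3%:R / 2%:R) *: b (inord 6)
  | _, _ => 0
  end.

Definition is_basis (n : nat) (b : 'I_n -> L) : Prop :=
  (forall c : 'I_n -> C, \sum_(i < n) c i *: b i = 0 -> forall i, c i = 0) /\
  (forall x : L, exists c : 'I_n -> C, x = \sum_(i < n) c i *: b i).

End LeibnizDefs.

(* The ideal I of squares is killed by left multiplication, [L, I] = 0 (a
   consequence of the right Leibniz identity), so [x, y] depends on y only
   modulo I.  Fix any lift l of the element l of e(2).  Through phi, right
   multiplication by l acts on I diagonally with eigenvalues 1/2, -3/2, -1/2,
   3/2; none of them is an integer, so [-, l] - c is bijective on I for every
   integer c.  Two consequences: an eigenvector of [-, l] with integer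
   eigenvalue is determined by its image in e(2), and every eigenvector of
   ad l in e(2) with integer eigenvalue lifts to such an eigenvector.  This
   gives lifts l, p+, p- with [l, l] = 0, [p+, l] = -p+, [p-, l] = p-; since
   eigenvalues add under the bracket, all other brackets among them are
   forced.  The brackets [X_i, y] are read off the module through phi, and
   [y, X_i] = 0. *)

From HB Require Import structures.
From mathcomp Require Import all_boot all_order all_algebra sesquilinear.
From mathcomp Require Import reals complex.
From mathcomp Require Import ring zify.
Set Implicit Arguments. Unset Strict Implicit. Unset Printing Implicit Defensive.
Import GRing.Theory Num.Theory.
Local Open Scope ring_scope.

Section StructureConstants.
Variable C : fieldType.

Lemma ev_ord n (i : 'I_n.+1) : ev C n i = delta_mx 0 i.
Proof. by rewrite /ev inord_val. Qed.

Lemma sum_scale_delta_mx n (u : 'I_n -> C) : \sum_i u i *: delta_mx 0 i = \row_i u i.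
Proof. by rewrite [RHS]row_sum_delta; apply: eq_bigr => i _; rewrite mxE. Qed.

Lemma sum_delta_mx_pair m n p (i0 : 'I_m) (j0 : 'I_n) (f : 'I_m -> 'I_n -> 'rV[C]_p) :
  \sum_i \sum_j ((delta_mx 0 i0 : 'rV_m) 0 i * (delta_mx 0 j0 : 'rV_n) 0 j) *: f i j
  = f i0 j0.
Proof.
rewrite (bigD1 i0) //= [X in _ + X]big1 /= => [|i /negPf i_ne]; last first.
  by apply: big1 => j _; rewrite mxE i_ne mul0r scale0r.
rewrite addr0 (bigD1 j0) //= [X in _ + X]big1 /= => [|j /negPf j_ne]; last first.
  by rewrite [_ _ j]mxE j_ne mulr0 scale0r.
by rewrite !mxE !eqxx mulr1 scale1r addr0.
Qed.

Lemma e2br_ev i j : e2br (ev C 2 i) (ev C 2 j) = e2tab C (inord i) (inord j).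
Proof. exact: sum_delta_mx_pair. Qed.

Lemma modact_ev i j : modact (ev C 3 i) (ev C 2 j) = modtab C (inord i) (inord j).
Proof. exact: sum_delta_mx_pair. Qed.

Lemma e2br0l (v : 'rV[C]_3) : e2br 0 v = 0.
Proof. by apply: big1 => i _; apply: big1 => j _; rewrite mxE mul0r scale0r. Qed.

Definition mod_weight (k : 'I_4) : C :=
  nth 0 [:: 2^-1; - (3%:R / 2%:R); - 2^-1; 3%:R / 2%:R] k.

Lemma modact_l (v : 'rV[C]_4) : modact v (ev C 2 0) = \row_k (mod_weight k * v 0 k).
Proof.
rewrite [RHS]row_sum_delta /modact; apply: eq_bigr => i _.
rewrite (bigD1 (inord 0)) //= [X in _ + X]big1 /= => [|j /negPf j_ne]; last first.
  by rewrite [ev _ _ _ _ _]mxE j_ne mulr0 scale0r.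
rewrite addr0 mxE [ev _ _ _ _ _]mxE !eqxx mulr1 mulrC -scalerA.
by case: i => [[|[|[|[|]]]] ?] //; rewrite /modtab inordK // -ev_ord.
Qed.

End StructureConstants.

Lemma mod_weight_nonint (C : numFieldType) (c : int) k : mod_weight C k != c%:~R.
Proof.
have [t ->] : exists t : int, mod_weight C k = (2 * t + 1)%:~R / 2.
  rewrite /mod_weight; case: k => [[|[|[|[|k]]]] Hk] //=.
  - by exists 0; field.
  - by exists (-2); field.
  - by exists (-1); field.
  - by exists 1; field.
apply/eqP => /(congr1 ( *%R^~ 2)); rewrite divfK ?pnatr_eq0 //.
by rewrite -[X in c%:~R * X]/(2%:~R) -intrM => /intr_inj; lia.
Qed.

Section SquareIdeal.
Variables (C : fieldType) (L : lmodType C) (br : L -> L -> L).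
Hypotheses (br_bilinear : bilinear_br br) (br_leibniz : right_leibniz br).

HB.instance Definition _ := bilinear_isBilinear.Build C L L L *:%R *:%R br
  (fun z a x y => br_bilinear.1 a x y z, fun z a x y => br_bilinear.2 a x y z).

Lemma br_sq_ideal0 x y : sq_ideal br x -> br y x = 0.
Proof.
move=> Ix; apply: (Ix (fun v => forall y, br y v = 0)) => [|z w]; last first.
  by apply: (addrI (br (br w z) z)); rewrite addr0 -br_leibniz.
split; first by move=> z; rewrite linear0r.
split=> [a u v u0 v0 z | u v u0]; first by rewrite linearPr /= u0 v0 scaler0 addr0.
split=> z; last by rewrite u0 linear0r.
by move: (br_leibniz z u v); rewrite !u0 linear0l add0r => <-.
Qed.

Lemma br_eigenD a b l (alpha beta : C) :
  br a l = alpha *: a -> br b l = beta *: b ->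
  br (br a b) l = (alpha + beta) *: br a b.
Proof.
by move=> al bl; rewrite br_leibniz al bl linearZl_LR linearZr_LR scalerDl.
Qed.

End SquareIdeal.

Section ExtensionBasis.
Variables (C : fieldType) (L : lmodType C) (n k : nat).
Variables (pi : L -> 'rV[C]_n) (phi : L -> 'rV[C]_k).
Hypotheses (piL : linear pi) (phiL : linear phi).
Hypothesis phi_inj : forall x y, pi x = 0 -> pi y = 0 -> phi x = phi y -> x = y.

HB.instance Definition _ := GRing.isLinear.Build C L _ *:%R pi piL.
HB.instance Definition _ := GRing.isLinear.Build C L _ *:%R phi phiL.

Variable b : 'I_(n + k) -> L.
Hypothesis pi_b_lshift : forall i, pi (b (lshift k i)) = delta_mx 0 i.
Hypothesis pi_b_rshift : forall j, pi (b (rshift n j)) = 0.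
Hypothesis phi_b_rshift : forall j, phi (b (rshift n j)) = delta_mx 0 j.

Let pi_sum_lshift (c : 'I_n -> C) : pi (\sum_i c i *: b (lshift k i)) = \row_i c i.
Proof.
rewrite linear_sum -sum_scale_delta_mx; apply: eq_bigr => i _.
by rewrite linearZ /= pi_b_lshift.
Qed.

Let pi_sum_rshift (d : 'I_k -> C) : pi (\sum_j d j *: b (rshift n j)) = 0.
Proof. by rewrite linear_sum big1 // => j _; rewrite linearZ /= pi_b_rshift scaler0. Qed.

Let phi_sum_rshift (d : 'I_k -> C) : phi (\sum_j d j *: b (rshift n j)) = \row_j d j.
Proof.
rewrite linear_sum -sum_scale_delta_mx; apply: eq_bigr => j _.
by rewrite linearZ /= phi_b_rshift.
Qed.

Lemma is_basis_extension : is_basis b.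
Proof.
split=> [c | x].
  rewrite big_split_ord /= => sum0.
  have c_l i : c (lshift k i) = 0.
    have /rowP/(_ i) := congr1 pi sum0.
    by rewrite linearD /= pi_sum_lshift pi_sum_rshift raddf0 !mxE addr0.
  have c_r j : c (rshift n j) = 0.
    move: sum0; under eq_bigr do rewrite c_l scale0r; rewrite big1 // add0r => sum0.
    by have /rowP/(_ j) := congr1 phi sum0; rewrite phi_sum_rshift raddf0 !mxE.
  by move=> i; rewrite -(splitK i); case: split => j /=.
pose y := x - \sum_i pi x 0 i *: b (lshift k i).
have pi_y : pi y = 0.
  by apply/rowP => i; rewrite linearB /= pi_sum_lshift !mxE subrr.
have y_E : y = \sum_j phi y 0 j *: b (rshift n j).
  apply: phi_inj => //.
  by rewrite phi_sum_rshift; apply/rowP => j; rewrite mxE.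
exists (fun i => match split i with inl i => pi x 0 i | inr j => phi y 0 j end).
rewrite big_split_ord /=.
under eq_bigr do rewrite (unsplitK (inl _ _)).
under [X in _ + X]eq_bigr do rewrite (unsplitK (inr _ _)).
by rewrite -y_E addrC subrK.
Qed.

End ExtensionBasis.

Section E2Extension.
Variables (C : numFieldType) (L : lmodType C) (br : L -> L -> L).
Hypotheses (br_bilinear : bilinear_br br) (br_leibniz : right_leibniz br).
Variables (pi : L -> 'rV[C]_3) (phi : L -> 'rV[C]_4).
Hypotheses (piL : linear pi) (pi_surj : forall u, exists x, pi x = u).
Hypothesis pi_ker : forall x, pi x = 0 <-> sq_ideal br x.
Hypothesis pi_br : forall x y, pi (br x y) = e2br (pi x) (pi y).
Hypothesis phiL : linear phi.
Hypothesis phi_inj :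
  forall x y, sq_ideal br x -> sq_ideal br y -> phi x = phi y -> x = y.
Hypothesis phi_surj : forall m, exists x, sq_ideal br x /\ phi x = m.
Hypothesis phi_br :
  forall i x, sq_ideal br i -> phi (br i x) = modact (phi i) (pi x).

HB.instance Definition _ := bilinear_isBilinear.Build C L L L *:%R *:%R br
  (fun z a x y => br_bilinear.1 a x y z, fun z a x y => br_bilinear.2 a x y z).
HB.instance Definition _ := GRing.isLinear.Build C L _ *:%R pi piL.
HB.instance Definition _ := GRing.isLinear.Build C L _ *:%R phi phiL.

Lemma pi_sq_ideal x : sq_ideal br x -> pi x = 0.
Proof. exact: (pi_ker x).2. Qed.

Lemma sq_ideal0 : sq_ideal br 0.
Proof. exact/pi_ker/raddf0. Qed.

Lemma sq_idealN x : sq_ideal br x -> sq_ideal br (- x).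
Proof. by move=> /pi_sq_ideal Ix; apply/pi_ker; rewrite linearN /= Ix oppr0. Qed.

Lemma sq_idealB x y : sq_ideal br x -> sq_ideal br y -> sq_ideal br (x - y).
Proof.
by move=> /pi_sq_ideal Ix /pi_sq_ideal Iy; apply/pi_ker; rewrite linearB /= Ix Iy subrr.
Qed.

Lemma sq_idealZ a x : sq_ideal br x -> sq_ideal br (a *: x).
Proof. by move=> /pi_sq_ideal Ix; apply/pi_ker; rewrite linearZ /= Ix scaler0. Qed.

Lemma sq_ideal_brl x y : sq_ideal br x -> sq_ideal br (br x y).
Proof. by move=> /pi_sq_ideal Ix; apply/pi_ker; rewrite pi_br Ix e2br0l. Qed.

Lemma br_pi_r x y y' : pi y = pi y' -> br x y = br x y'.
Proof.
move=> /eqP; rewrite -subr_eq0 -linearB => /eqP /pi_ker Iyy'.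
by apply/eqP; rewrite -subr_eq0 -linearBr /= (br_sq_ideal0 br_bilinear br_leibniz).
Qed.

Lemma phi_br_eq x y t : sq_ideal br x -> sq_ideal br t ->
  phi t = modact (phi x) (pi y) -> br x y = t.
Proof. by move=> Ix It E; apply: phi_inj => //; [exact: sq_ideal_brl | rewrite phi_br]. Qed.

Section RightActionOfL.
Variable l : L.
Hypothesis pi_l : pi l = ev C 2 0.

Lemma sq_ideal_eigen0 (c : int) d :
  sq_ideal br d -> br d l = c%:~R *: d -> d = 0.
Proof.
move=> Id dl; apply: phi_inj => //; first exact: sq_ideal0.
apply/rowP => k; have /rowP/(_ k) := congr1 phi dl.
rewrite phi_br // pi_l modact_l linearZ /= raddf0 !mxE => /eqP.
by rewrite -subr_eq0 -mulrBl mulf_eq0 subr_eq0 (negPf (mod_weight_nonint _ _ _)) => /eqP.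
Qed.

Lemma sq_ideal_eigen_surj (c : int) d :
  sq_ideal br d -> exists2 v, sq_ideal br v & br v l - c%:~R *: v = d.
Proof.
move=> Id; have [v [Iv phi_v]] :=
  phi_surj (\row_k (phi d 0 k / (mod_weight C k - c%:~R))).
exists v => //; apply: phi_inj => //.
  by apply: sq_idealB; [exact: sq_ideal_brl | exact: sq_idealZ].
rewrite linearB linearZ /= phi_br // pi_l modact_l phi_v.
apply/rowP => k; rewrite !mxE -mulrBl mulrC divfK // subr_eq0.
exact: mod_weight_nonint.
Qed.

Lemma eigen_lift_eq (c : int) x y : pi x = pi y ->
  br x l = c%:~R *: x -> br y l = c%:~R *: y -> x = y.
Proof.
move=> pi_xy xl yl; apply/eqP; rewrite -subr_eq0; apply/eqP/(sq_ideal_eigen0 (c := c)).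
  by apply/pi_ker; rewrite linearB /= pi_xy subrr.
by rewrite linearBl /= xl yl scalerBr.
Qed.

Lemma eigen_lift (c : int) u : e2br u (ev C 2 0) = c%:~R *: u ->
  exists2 x, pi x = u & br x l = c%:~R *: x.
Proof.
move=> uE; have [y pi_y] := pi_surj u.
have Id : sq_ideal br (br y l - c%:~R *: y).
  by apply/pi_ker; rewrite linearB linearZ /= pi_br pi_y pi_l uE subrr.
have [v Iv vE] := sq_ideal_eigen_surj c Id.
exists (y - v); first by rewrite linearB /= pi_y pi_sq_ideal // subr0.
rewrite linearBl /= scalerBr.
have -> : br y l = br v l - c%:~R *: v + c%:~R *: y by rewrite vE subrK.
by rewrite addrC addrA addKr addrC.
Qed.

Lemma br_eigen_lift_eq (alpha beta : int) a b t :
  br a l = alpha%:~R *: a -> br b l = beta%:~R *: b ->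
  br t l = (alpha + beta)%:~R *: t -> pi (br a b) = pi t -> br a b = t.
Proof.
move=> al bl tl pi_abt; apply: (eigen_lift_eq (c := alpha + beta)) => //.
by rewrite intrD; apply: br_eigenD.
Qed.

End RightActionOfL.

Lemma exists_l_lift : exists2 l, pi l = ev C 2 0 & br l l = 0.
Proof.
have [l0 pi_l0] := pi_surj (ev C 2 0).
have [|l pi_l ll0] := eigen_lift pi_l0 (c := 0) (u := ev C 2 0).
  by rewrite e2br_ev /e2tab !inordK //= mulr0z scale0r.
exists l => //; rewrite (@br_pi_r l l l0) ?ll0 ?mulr0z ?scale0r //.
by rewrite pi_l pi_l0.
Qed.

Section Lifts.
Variables (l p m x1 x2 x3 x4 : L).
Hypotheses (pi_l : pi l = ev C 2 0) (pi_p : pi p = ev C 2 1) (pi_m : pi m = ev C 2 2).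
Hypotheses (br_ll : br l l = 0) (p_eigen : br p l = (-1)%:~R *: p)
  (m_eigen : br m l = 1%:~R *: m).
Hypotheses (Ix1 : sq_ideal br x1) (Ix2 : sq_ideal br x2)
  (Ix3 : sq_ideal br x3) (Ix4 : sq_ideal br x4).
Hypotheses (phi_x1 : phi x1 = ev C 3 0) (phi_x2 : phi x2 = ev C 3 1)
  (phi_x3 : phi x3 = ev C 3 2) (phi_x4 : phi x4 = ev C 3 3).

Let l_eigen : br l l = 0%:~R *: l.
Proof. by rewrite br_ll mulr0z scale0r. Qed.

Let zero_eigen (c : int) : br 0 l = c%:~R *: 0.
Proof. by rewrite linear0l scaler0. Qed.

Lemma br_pl : br p l = - p.
Proof. by rewrite p_eigen mulrN1z scaleN1r. Qed.

Lemma br_ml : br m l = m.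
Proof. by rewrite m_eigen scale1r. Qed.

Lemma br_lp : br l p = p.
Proof.
apply: (br_eigen_lift_eq pi_l l_eigen p_eigen p_eigen).
by rewrite pi_br pi_l pi_p e2br_ev /e2tab !inordK.
Qed.

Lemma br_lm : br l m = - m.
Proof.
apply: (br_eigen_lift_eq pi_l l_eigen m_eigen).
  by rewrite linearNl /= m_eigen scalerN.
by rewrite pi_br pi_l pi_m e2br_ev /e2tab !inordK //= linearN /= pi_m.
Qed.

Lemma br_pp : br p p = 0.
Proof.
apply: (br_eigen_lift_eq pi_l p_eigen p_eigen (zero_eigen _)).
by rewrite pi_br pi_p e2br_ev /e2tab !inordK //= raddf0.
Qed.

Lemma br_pm : br p m = 0.
Proof.
apply: (br_eigen_lift_eq pi_l p_eigen m_eigen (zero_eigen _)).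
by rewrite pi_br pi_p pi_m e2br_ev /e2tab !inordK //= raddf0.
Qed.

Lemma br_mp : br m p = 0.
Proof.
apply: (br_eigen_lift_eq pi_l m_eigen p_eigen (zero_eigen _)).
by rewrite pi_br pi_p pi_m e2br_ev /e2tab !inordK //= raddf0.
Qed.

Lemma br_mm : br m m = 0.
Proof.
apply: (br_eigen_lift_eq pi_l m_eigen m_eigen (zero_eigen _)).
by rewrite pi_br pi_m e2br_ev /e2tab !inordK //= raddf0.
Qed.

Definition lift_family (i : 'I_7) : L := nth 0 [:: l; p; m; x1; x2; x3; x4] i.

Lemma lift_family_basis : is_basis lift_family.
Proof.
apply: (is_basis_extension piL phiL (n := 3) (k := 4)).
- by move=> x y /pi_ker Ix /pi_ker Iy; apply: phi_inj.
- by move=> i; rewrite -ev_ord; case: i => [[|[|[|]]] ?].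
- by case=> [[|[|[|[|]]]] ?] //=; apply: pi_sq_ideal.
- by move=> j; rewrite -ev_ord; case: j => [[|[|[|[|]]]] ?].
Qed.

Lemma lift_family_sq_ideal (k : 'I_7) : (3 <= k)%N -> sq_ideal br (lift_family k).
Proof. by case: k => [[|[|[|[|[|[|[|]]]]]]] ?]. Qed.

Lemma lift_family_br i j :
  br (lift_family i) (lift_family j) = target_tab lift_family i j.
Proof.
case: i => [[|[|[|[|[|[|[|i]]]]]]] Hi] //; case: j => [[|[|[|[|[|[|[|j]]]]]]] Hj] //;
  rewrite /target_tab /lift_family /= ?inordK //=.
(* Entries among l, p, m are the lemmas above, [_, X_k] vanishes because
   [L, I] = 0, and [X_k, _] is read off the module through phi. *)
all: first
  [ by rewrite ?br_ll ?br_lp ?br_lm ?br_pl ?br_pp ?br_pm ?br_ml ?br_mp ?br_mm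
  | exact: (br_sq_ideal0 br_bilinear br_leibniz)
  | apply: phi_br_eq => //; rewrite ?linearZ ?linearN ?raddf0 /=
      ?phi_x1 ?phi_x2 ?phi_x3 ?phi_x4 ?pi_l ?pi_p ?pi_m ?modact_ev /modtab ?inordK // ].
all: by [apply: sq_ideal0 | apply: sq_idealZ | apply: sq_idealN].
Qed.

End Lifts.

Lemma e2_extension_basis : exists b : 'I_7 -> L,
  [/\ is_basis b, forall k : 'I_7, (3 <= k)%N -> sq_ideal br (b k)
    & forall i j : 'I_7, br (b i) (b j) = target_tab b i j].
Proof.
have [l pi_l br_ll] := exists_l_lift.
have [|p pi_p p_eigen] := eigen_lift pi_l (c := -1) (u := ev C 2 1).
  by rewrite e2br_ev /e2tab !inordK //= mulrN1z scaleN1r.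
have [|m pi_m m_eigen] := eigen_lift pi_l (c := 1) (u := ev C 2 2).
  by rewrite e2br_ev /e2tab !inordK //= scale1r.
have [x1 [Ix1 phi_x1]] := phi_surj (ev C 3 0).
have [x2 [Ix2 phi_x2]] := phi_surj (ev C 3 1).
have [x3 [Ix3 phi_x3]] := phi_surj (ev C 3 2).
have [x4 [Ix4 phi_x4]] := phi_surj (ev C 3 3).
exists (lift_family l p m x1 x2 x3 x4); split.
- exact: lift_family_basis.
- exact: lift_family_sq_ideal.
- exact: lift_family_br.
Qed.

End E2Extension.

Theorem mainTheorem6 (R : realType) (L : lmodType (complex R))
  (br : L -> L -> L) :
  bilinear_br br ->
  right_leibniz br ->
  (exists (pi : L -> 'rV[complex R]_3) (phi : L -> 'rV[complex R]_4),
     (* pi induces a Lie algebra isomorphism L/I ~= e(2) *)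
     (forall (a : complex R) x y, pi (a *: x + y) = a *: pi x + pi y) /\
     (forall u, exists x, pi x = u) /\
     (forall x, pi x = 0 <-> sq_ideal br x) /\
     (forall x y, pi (br x y) = e2br (pi x) (pi y)) /\
     (* phi restricts to a module isomorphism I ~= the given module *)
     (forall (a : complex R) x y, phi (a *: x + y) = a *: phi x + phi y) /\
     (forall x y, sq_ideal br x -> sq_ideal br y -> phi x = phi y -> x = y) /\
     (forall m, exists x, sq_ideal br x /\ phi x = m) /\
     (forall i x, sq_ideal br i -> phi (br i x) = modact (phi i) (pi x))) ->
  exists b : 'I_7 -> L,
    is_basis b /\
    (forall k : 'I_7, (3 <= k)%N -> sq_ideal br (b k)) /\
    (forall i j : 'I_7, br (b i) (b j) = target_tab b i j).
Proof.
move=> br_bilinear br_leibniz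
  [pi [phi [piL [pi_surj [pi_ker [pi_br [phiL [phi_inj [phi_surj phi_br]]]]]]]]].
have [b [b_basis b_sq b_br]] := e2_extension_basis br_bilinear br_leibniz
  piL pi_surj pi_ker pi_br phiL phi_inj phi_surj phi_br.
by exists b.
Qed.
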